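(* For every projective fibration $g:A\to B$ in $\mathbf{Gpd}^{\mathbf{G}}$, the pullback functor $g^*:\mathbf{Gpd}^{\mathbf{G}}/B\to\mathbf{Gpd}^{\mathbf{G}}/A$ has a right adjoint $\Pi_g$, and $\Pi_g$ maps projective fibrations over $A$ to projective fibrations over $B$.
   Context: $\mathbf{Gpd}^{\mathbf{G}}$ is the category of (small) groupoids equipped with an involution and functors commuting with the involutions. A morphism of $\mathbf{Gpd}^{\mathbf{G}}$ is a projective fibration iff its underlying functor of groupoids is an isofibration (for every object $x$ of the domain and isomorphism $h:f(x)\to y$ in the codomain there is an isomorphism $\tilde h$ with domain $x$ and $f(\tilde h)=h$). *)

From Stdlib Require Import ProofIrrelevance.

Record Gpd : Type := MkGpd {
  Ob : Type; Ar : Type;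
  src : Ar -> Ob; tgt : Ar -> Ob;
  idn : Ob -> Ar;
  cmp : forall g f : Ar, tgt f = src g -> Ar;
  inv : Ar -> Ar;
  src_idn : forall x, src (idn x) = x;
  tgt_idn : forall x, tgt (idn x) = x;
  src_cmp : forall g f (H : tgt f = src g), src (cmp g f H) = src f;
  tgt_cmp : forall g f (H : tgt f = src g), tgt (cmp g f H) = tgt g;
  cmp_idl : forall f (H : tgt f = src (idn (tgt f))), cmp (idn (tgt f)) f H = f;
  cmp_idr : forall f (H : tgt (idn (src f)) = src f), cmp f (idn (src f)) H = f;
  cmp_assoc : forall h g f (H1 : tgt f = src g) (H2 : tgt (cmp g f H1) = src h)
                (H3 : tgt g = src h) (H4 : tgt f = src (cmp h g H3)),
                cmp h (cmp g f H1) H2 = cmp (cmp h g H3) f H4;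
  src_inv : forall f, src (inv f) = tgt f;
  tgt_inv : forall f, tgt (inv f) = src f;
  cmp_invl : forall f (H : tgt f = src (inv f)), cmp (inv f) f H = idn (src f);
  cmp_invr : forall f (H : tgt (inv f) = src f), cmp f (inv f) H = idn (tgt f)
}.
Arguments src {_} _. Arguments tgt {_} _. Arguments idn {_} _.
Arguments cmp {_} _ _ _. Arguments inv {_} _.

Lemma cmp_congr (G : Gpd) (g g' f f' : Ar G) (H : tgt f = src g) (H' : tgt f' = src g') :
  g = g' -> f = f' -> cmp g f H = cmp g' f' H'.
Proof. intros e1 e2; subst; f_equal; apply proof_irrelevance. Qed.

Record Fn (G1 G2 : Gpd) := MkFn {
  fo : Ob G1 -> Ob G2; fa : Ar G1 -> Ar G2;
  fn_src : forall f, src (fa f) = fo (src f);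
  fn_tgt : forall f, tgt (fa f) = fo (tgt f);
  fn_idn : forall x, fa (idn x) = idn (fo x);
  fn_cmp : forall g f (H : tgt f = src g) (H' : tgt (fa f) = src (fa g)),
             fa (cmp g f H) = cmp (fa g) (fa f) H'
}.
Arguments MkFn {G1 G2} _ _ _ _ _ _.
Arguments fo {G1 G2} _ _. Arguments fa {G1 G2} _ _.
Arguments fn_src {G1 G2} _ _. Arguments fn_tgt {G1 G2} _ _.
Arguments fn_idn {G1 G2} _ _. Arguments fn_cmp {G1 G2} _ _ _ _ _.

Lemma inv_unique (G : Gpd) (u v : Ar G) (H : tgt v = src u) :
  cmp u v H = idn (tgt u) -> v = inv u.
Proof.
  intro E.
  assert (K0 : tgt (idn (src (inv u))) = src (inv u)) by (rewrite tgt_idn; reflexivity).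
  rewrite <- (cmp_idr G (inv u) K0).
  assert (K1 : tgt (cmp u v H) = src (inv u))
    by (rewrite tgt_cmp, src_inv; reflexivity).
  rewrite (cmp_congr G (inv u) (inv u) (idn (src (inv u))) (cmp u v H) K0 K1 eq_refl)
    by (rewrite E, src_inv; reflexivity).
  assert (K3 : tgt u = src (inv u)) by (rewrite src_inv; reflexivity).
  assert (K4 : tgt v = src (cmp (inv u) u K3)) by (rewrite src_cmp; exact H).
  rewrite (cmp_assoc G (inv u) u v H K1 K3 K4).
  assert (K5 : tgt v = src (idn (tgt v))) by (rewrite src_idn; reflexivity).
  rewrite (cmp_congr G _ (idn (tgt v)) v v K4 K5); [ symmetry; apply cmp_idl | | reflexivity ].
  rewrite cmp_invl, H; reflexivity.
Qed.

Lemma fn_inv (G1 G2 : Gpd) (F : Fn G1 G2) (f : Ar G1) : fa F (inv f) = inv (fa F f).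
Proof.
  assert (H : tgt (fa F (inv f)) = src (fa F f))
    by (rewrite fn_tgt, fn_src, tgt_inv; reflexivity).
  apply (inv_unique G2 _ _ H).
  assert (K : tgt (inv f) = src f) by apply tgt_inv.
  rewrite <- (fn_cmp F f (inv f) K H), cmp_invr, fn_idn, fn_tgt; reflexivity.
Qed.

(* Groupoids with a (strict) involution: the objects of Gpd^G. *)
Record GpdG := MkGpdG {
  ggpd :> Gpd;
  tau : Fn ggpd ggpd;
  tau_o : forall x, fo tau (fo tau x) = x;
  tau_a : forall f, fa tau (fa tau f) = f
}.

Record GMor (X Y : GpdG) := MkGMor {
  gfn :> Fn X Y;
  gm_o : forall x, fo gfn (fo (tau X) x) = fo (tau Y) (fo gfn x);
  gm_a : forall f, fa gfn (fa (tau X) f) = fa (tau Y) (fa gfn f)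
}.
Arguments MkGMor {X Y} _ _ _.
Arguments gfn {X Y} _. Arguments gm_o {X Y} _ _. Arguments gm_a {X Y} _ _.

(* Projective fibrations: the underlying functor is an isofibration. *)
Definition proj_fib (X Y : GpdG) (p : GMor X Y) : Prop :=
  forall (x : Ob X) (h : Ar Y), src h = fo p x ->
    exists ht : Ar X, src ht = x /\ fa p ht = h.
Arguments proj_fib {X Y} _.

Record Over (B : GpdG) := MkOver { tot : GpdG; str : GMor tot B }.
Arguments MkOver {B} _ _. Arguments tot {B} _. Arguments str {B} _.

Record OMor (B : GpdG) (X Y : Over B) := MkOMor {
  om :> GMor (tot X) (tot Y);
  om_o : forall x, fo (str Y) (fo om x) = fo (str X) x;
  om_a : forall f, fa (str Y) (fa om f) = fa (str X) f
}.
Arguments MkOMor {B X Y} _ _ _.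
Arguments om {B X Y} _. Arguments om_o {B X Y} _ _. Arguments om_a {B X Y} _ _.

Lemma sig_eq (T : Type) (P : T -> Prop) (z w : sig P) :
  proj1_sig z = proj1_sig w -> z = w.
Proof.
  destruct z as [z pz], w as [w pw]; simpl; intros ->.
  f_equal; apply proof_irrelevance.
Qed.

Section Pullback.
Variables (A B : GpdG) (g : GMor A B) (X : Over B).

Definition PO := {p : Ob A * Ob (tot X) | fo g (fst p) = fo (str X) (snd p)}.
Definition PA := {p : Ar A * Ar (tot X) | fa g (fst p) = fa (str X) (snd p)}.

Lemma pf_src (p : Ar A * Ar (tot X)) :
  fa g (fst p) = fa (str X) (snd p) -> fo g (src (fst p)) = fo (str X) (src (snd p)).
Proof. intro e; rewrite <- (fn_src g), <- (fn_src (str X)), e; reflexivity. Qed.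
Lemma pf_tgt (p : Ar A * Ar (tot X)) :
  fa g (fst p) = fa (str X) (snd p) -> fo g (tgt (fst p)) = fo (str X) (tgt (snd p)).
Proof. intro e; rewrite <- (fn_tgt g), <- (fn_tgt (str X)), e; reflexivity. Qed.
Lemma pf_idn (p : Ob A * Ob (tot X)) :
  fo g (fst p) = fo (str X) (snd p) -> fa g (idn (fst p)) = fa (str X) (idn (snd p)).
Proof. intro e; rewrite (fn_idn g), (fn_idn (str X)), e; reflexivity. Qed.
Lemma pf_inv (p : Ar A * Ar (tot X)) :
  fa g (fst p) = fa (str X) (snd p) -> fa g (inv (fst p)) = fa (str X) (inv (snd p)).
Proof. intro e; rewrite (fn_inv _ _ g), (fn_inv _ _ (str X)), e; reflexivity. Qed.
Lemma pf_cmp (a2 a1 : Ar A) (e2 e1 : Ar (tot X))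
  (E2 : fa g a2 = fa (str X) e2) (E1 : fa g a1 = fa (str X) e1)
  (HA : tgt a1 = src a2) (HX : tgt e1 = src e2) :
  fa g (cmp a2 a1 HA) = fa (str X) (cmp e2 e1 HX).
Proof.
  assert (H1 : tgt (fa g a1) = src (fa g a2))
    by (rewrite (fn_src g), (fn_tgt g), HA; reflexivity).
  assert (H2 : tgt (fa (str X) e1) = src (fa (str X) e2))
    by (rewrite (fn_src (str X)), (fn_tgt (str X)), HX; reflexivity).
  rewrite (fn_cmp g a2 a1 HA H1), (fn_cmp (str X) e2 e1 HX H2).
  apply cmp_congr; assumption.
Qed.

Definition Psrc (z : PA) : PO :=
  exist _ (src (fst (proj1_sig z)), src (snd (proj1_sig z))) (pf_src _ (proj2_sig z)).
Definition Ptgt (z : PA) : PO :=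
  exist _ (tgt (fst (proj1_sig z)), tgt (snd (proj1_sig z))) (pf_tgt _ (proj2_sig z)).
Definition Pidn (z : PO) : PA :=
  exist _ (idn (fst (proj1_sig z)), idn (snd (proj1_sig z))) (pf_idn _ (proj2_sig z)).
Definition Pinv (z : PA) : PA :=
  exist _ (inv (fst (proj1_sig z)), inv (snd (proj1_sig z))) (pf_inv _ (proj2_sig z)).
Definition Pcmp (z2 z1 : PA) (H : Ptgt z1 = Psrc z2) : PA :=
  exist _ (cmp (fst (proj1_sig z2)) (fst (proj1_sig z1))
               (f_equal (fun w => fst (proj1_sig w)) H),
           cmp (snd (proj1_sig z2)) (snd (proj1_sig z1))
               (f_equal (fun w => snd (proj1_sig w)) H))
        (pf_cmp _ _ _ _ (proj2_sig z2) (proj2_sig z1) _ _).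

Ltac pb_solve :=
  intros; apply sig_eq; simpl;
  repeat match goal with z : PA |- _ => destruct z as [[? ?] ?] end;
  repeat match goal with z : PO |- _ => destruct z as [[? ?] ?] end;
  simpl in *.

Definition PGpd : Gpd.
Proof.
  refine (MkGpd PO PA Psrc Ptgt Pidn Pcmp Pinv _ _ _ _ _ _ _ _ _ _ _).
  - pb_solve; rewrite !src_idn; reflexivity.
  - pb_solve; rewrite !tgt_idn; reflexivity.
  - pb_solve; rewrite !src_cmp; reflexivity.
  - pb_solve; rewrite !tgt_cmp; reflexivity.
  - pb_solve; rewrite !cmp_idl; reflexivity.
  - pb_solve; rewrite !cmp_idr; reflexivity.
  - pb_solve; f_equal; apply cmp_assoc.
  - pb_solve; rewrite !src_inv; reflexivity.
  - pb_solve; rewrite !tgt_inv; reflexivity.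
  - pb_solve; rewrite !cmp_invl; reflexivity.
  - pb_solve; rewrite !cmp_invr; reflexivity.
Defined.

Lemma pf_tau_o (p : Ob A * Ob (tot X)) :
  fo g (fst p) = fo (str X) (snd p) ->
  fo g (fo (tau A) (fst p)) = fo (str X) (fo (tau (tot X)) (snd p)).
Proof. intro e; rewrite (gm_o g), (gm_o (str X)), e; reflexivity. Qed.
Lemma pf_tau_a (p : Ar A * Ar (tot X)) :
  fa g (fst p) = fa (str X) (snd p) ->
  fa g (fa (tau A) (fst p)) = fa (str X) (fa (tau (tot X)) (snd p)).
Proof. intro e; rewrite (gm_a g), (gm_a (str X)), e; reflexivity. Qed.

Definition Ptau : Fn PGpd PGpd.
Proof.
  refine (@MkFn PGpd PGpd
    (fun z => exist _ (fo (tau A) (fst (proj1_sig z)), fo (tau (tot X)) (snd (proj1_sig z)))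
                     (pf_tau_o _ (proj2_sig z)))
    (fun z => exist _ (fa (tau A) (fst (proj1_sig z)), fa (tau (tot X)) (snd (proj1_sig z)))
                     (pf_tau_a _ (proj2_sig z))) _ _ _ _).
  - pb_solve; rewrite !fn_src; reflexivity.
  - pb_solve; rewrite !fn_tgt; reflexivity.
  - pb_solve; rewrite !fn_idn; reflexivity.
  - pb_solve; f_equal; apply fn_cmp.
Defined.

Definition PGpdG : GpdG.
Proof.
  refine (MkGpdG PGpd Ptau _ _).
  - intros [[a e] E]; apply sig_eq; simpl; rewrite !tau_o; reflexivity.
  - intros [[a e] E]; apply sig_eq; simpl; rewrite !tau_a; reflexivity.
Defined.

Definition Pfst_fn : Fn PGpdG A.
Proof.
  refine (@MkFn PGpdG A (fun z => fst (proj1_sig z)) (fun z => fst (proj1_sig z)) _ _ _ _);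
    intros;
    repeat match goal with z : PA |- _ => destruct z as [[? ?] ?] end;
    repeat match goal with z : PO |- _ => destruct z as [[? ?] ?] end;
    simpl; try reflexivity; apply cmp_congr; reflexivity.
Defined.

Definition Pfst : GMor PGpdG A := MkGMor Pfst_fn (fun _ => eq_refl) (fun _ => eq_refl).

Definition pb : Over A := MkOver PGpdG Pfst.

End Pullback.
Arguments pb {A B} g X.

Section PullbackMap.
Variables (A B : GpdG) (g : GMor A B) (X X' : Over B) (u : OMor B X X').

Lemma pf_mo (p : Ob A * Ob (tot X)) :
  fo g (fst p) = fo (str X) (snd p) -> fo g (fst p) = fo (str X') (fo u (snd p)).
Proof. intro e; rewrite (om_o u); exact e. Qed.
Lemma pf_ma (p : Ar A * Ar (tot X)) :
  fa g (fst p) = fa (str X) (snd p) -> fa g (fst p) = fa (str X') (fa u (snd p)).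
Proof. intro e; rewrite (om_a u); exact e. Qed.

Definition pbfn : Fn (tot (pb g X)) (tot (pb g X')).
Proof.
  refine (@MkFn (tot (pb g X)) (tot (pb g X'))
    (fun z : PO A B g X => exist _ (fst (proj1_sig z), fo u (snd (proj1_sig z)))
                     (pf_mo _ (proj2_sig z)))
    (fun z : PA A B g X => exist _ (fst (proj1_sig z), fa u (snd (proj1_sig z)))
                     (pf_ma _ (proj2_sig z))) _ _ _ _);
  intros; apply sig_eq; simpl.
  - rewrite fn_src; reflexivity.
  - rewrite fn_tgt; reflexivity.
  - rewrite fn_idn; reflexivity.
  - f_equal; [ apply cmp_congr; reflexivity | apply fn_cmp ].
Defined.

Definition pbgm : GMor (tot (pb g X)) (tot (pb g X')).
Proof.
  refine (MkGMor pbfn _ _); intros; apply sig_eq; simpl; f_equal.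
  - apply (gm_o u).
  - apply (gm_a u).
Defined.

Definition pbmap : OMor A (pb g X) (pb g X') :=
  MkOMor pbgm (fun _ => eq_refl) (fun _ => eq_refl).

End PullbackMap.
Arguments pbmap {A B} g {X X'} u.

Definition fn_eq (G1 G2 : Gpd) (F F' : Fn G1 G2) : Prop :=
  (forall x, fo F x = fo F' x) /\ (forall f, fa F f = fa F' f).
Definition comp_is (G1 G2 G3 : Gpd) (F2 : Fn G2 G3) (F1 : Fn G1 G2) (F : Fn G1 G3) : Prop :=
  (forall x, fo F2 (fo F1 x) = fo F x) /\ (forall f, fa F2 (fa F1 f) = fa F f).
Arguments fn_eq {G1 G2} _ _. Arguments comp_is {G1 G2 G3} _ _ _.

(* (Pi, eps) is a right adjoint of g^* : Gpd^G/B -> Gpd^G/A, given by universal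
   arrows: for every Y over A, eps Y : g^*(Pi Y) -> Y is couniversal, i.e. every
   f : g^* X -> Y over A factors as eps Y o g^*(u) for a unique u : X -> Pi Y over B. *)
Definition right_adjoint (A B : GpdG) (g : GMor A B) (Pi : Over A -> Over B)
  (eps : forall Y : Over A, OMor A (pb g (Pi Y)) Y) : Prop :=
  forall (Y : Over A) (X : Over B) (f : OMor A (pb g X) Y),
    exists u : OMor B X (Pi Y),
      comp_is (eps Y) (pbmap g u) f /\
      (forall u' : OMor B X (Pi Y), comp_is (eps Y) (pbmap g u') f -> fn_eq u' u).
Arguments right_adjoint {A B} g Pi eps.

(* The right adjoint [Pi_g Y] is the groupoid of partial sections: an object over
   [b] is a section of [Y -> A] over the fibre [g^-1 b], and an arrow over
   [h : b -> b'] assigns to each arrow of [A] over [h] an arrow of [Y] over it,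
   naturally with respect to the sections at both ends.  Because [g] is an
   isofibration, every arrow over a composite [h' o h] factors through arrows over
   [h] and [h'], which is what makes composition of such families well defined.
   The counit evaluates a section and the transpose of [g^* X -> Y] is its
   currying.  When [Y -> A] is an isofibration too, a section over [b] can be
   transported along [h : b -> b'] by conjugating with lifts of [h^-1] through
   [g] and with lifts through [Y] of their inverses.  Any other right adjoint is
   isomorphic to this one over [B], and isofibrations are stable under retracts
   over [B]. *)

From Stdlib Require Import ProofIrrelevance FunctionalExtensionality ClassicalEpsilon.

(* Composition made total: [comp g f] is the junk value [f] when [f] and [g]
   are not composable, so that equations need not carry composability proofs. *)
Definition comp {G : Gpd} (g f : Ar G) : Ar G :=
  match excluded_middle_informative (tgt f = src g) with
  | left H => cmp g f H
  | right _ => f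
  end.

Lemma cmp_comp (G : Gpd) (g f : Ar G) (H : tgt f = src g) : cmp g f H = comp g f.
Proof.
  unfold comp; destruct (excluded_middle_informative _) as [H' | n];
    [apply cmp_congr; reflexivity | contradiction].
Qed.

Section GroupoidLaws.
Variable G : Gpd.
Implicit Types f g h : Ar G.

Lemma src_comp g f : tgt f = src g -> src (comp g f) = src f.
Proof. intro H; rewrite <- (cmp_comp _ _ _ H); apply src_cmp. Qed.

Lemma tgt_comp g f : tgt f = src g -> tgt (comp g f) = tgt g.
Proof. intro H; rewrite <- (cmp_comp _ _ _ H); apply tgt_cmp. Qed.

Lemma comp_idl x f : tgt f = x -> comp (idn x) f = f.
Proof.
  intros <-; assert (H : tgt f = src (idn (tgt f))) by (rewrite src_idn; reflexivity).
  rewrite <- (cmp_comp _ _ _ H); apply cmp_idl.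
Qed.

Lemma comp_idr x f : src f = x -> comp f (idn x) = f.
Proof.
  intros <-; assert (H : tgt (idn (src f)) = src f) by (rewrite tgt_idn; reflexivity).
  rewrite <- (cmp_comp _ _ _ H); apply cmp_idr.
Qed.

Lemma comp_assoc h g f :
  tgt f = src g -> tgt g = src h -> comp h (comp g f) = comp (comp h g) f.
Proof.
  intros H1 H3.
  assert (H2 : tgt (cmp g f H1) = src h) by (rewrite tgt_cmp; exact H3).
  assert (H4 : tgt f = src (cmp h g H3)) by (rewrite src_cmp; exact H1).
  rewrite <- (cmp_comp _ _ _ H1), <- (cmp_comp _ _ _ H2), <- (cmp_comp _ _ _ H3),
    <- (cmp_comp _ _ _ H4).
  apply cmp_assoc.
Qed.

Lemma comp_invl f : comp (inv f) f = idn (src f).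
Proof.
  assert (H : tgt f = src (inv f)) by (rewrite src_inv; reflexivity).
  rewrite <- (cmp_comp _ _ _ H); apply cmp_invl.
Qed.

Lemma comp_invr f : comp f (inv f) = idn (tgt f).
Proof.
  assert (H : tgt (inv f) = src f) by (rewrite tgt_inv; reflexivity).
  rewrite <- (cmp_comp _ _ _ H); apply cmp_invr.
Qed.

Lemma inv_unique_comp f g : tgt g = src f -> comp f g = idn (tgt f) -> g = inv f.
Proof. intros H E; apply (inv_unique G _ _ H); rewrite cmp_comp; exact E. Qed.

Lemma invK f : inv (inv f) = f.
Proof.
  symmetry; apply inv_unique_comp; [rewrite src_inv; reflexivity |].
  rewrite comp_invl, tgt_inv; reflexivity.
Qed.

Lemma inv_idn (x : Ob G) : inv (idn x) = idn x.
Proof.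
  symmetry; apply inv_unique_comp; [rewrite src_idn, tgt_idn; reflexivity |].
  rewrite tgt_idn; apply comp_idl, tgt_idn.
Qed.

Lemma idn_idem f : tgt f = src f -> comp f f = f -> f = idn (src f).
Proof.
  intros H E.
  assert (E2 : comp (comp f f) (inv f) = comp f (inv f)) by (rewrite E; reflexivity).
  rewrite <- comp_assoc, comp_invr, comp_idr in E2;
    try rewrite ?tgt_inv, ?src_inv, ?tgt_idn; auto.
  rewrite H in E2; exact E2.
Qed.
End GroupoidLaws.

Lemma fa_comp (G1 G2 : Gpd) (F : Fn G1 G2) (g f : Ar G1) :
  tgt f = src g -> fa F (comp g f) = comp (fa F g) (fa F f).
Proof.
  intro H.
  assert (H' : tgt (fa F f) = src (fa F g)) by (rewrite fn_src, fn_tgt, H; reflexivity).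
  rewrite <- (cmp_comp _ _ _ H), <- (cmp_comp _ _ _ H'); apply fn_cmp.
Qed.

(* [gpd_eq] proves equations between endpoints of composites; [gpd_extra] and
   [gpd_last] are hooks, redefined below as new endpoint lemmas become available. *)
Ltac gpd_extra := fail.
Ltac gpd_last := fail.
Ltac gpd_eq :=
  repeat (first [ rewrite src_idn | rewrite tgt_idn | rewrite src_inv | rewrite tgt_inv
                | rewrite fn_src | rewrite fn_tgt
                | rewrite src_comp by gpd_eq | rewrite tgt_comp by gpd_eq | gpd_extra ]);
  first [ reflexivity | assumption | (symmetry; assumption) | congruence | gpd_last ].

Lemma inv_comp (G : Gpd) (g f : Ar G) :
  tgt f = src g -> inv (comp g f) = comp (inv f) (inv g).
Proof.
  intro H; symmetry; apply inv_unique_comp; [gpd_eq |].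
  rewrite comp_assoc, <- (comp_assoc _ g f), comp_invr, comp_idr, comp_invr, tgt_comp;
    gpd_eq.
Qed.

Lemma comp_invKl (G : Gpd) (a z : Ar G) : tgt z = src a -> comp (inv a) (comp a z) = z.
Proof. intro H; rewrite comp_assoc, comp_invl, comp_idl; gpd_eq. Qed.

Ltac comp_right_assoc := repeat (rewrite <- comp_assoc by gpd_eq).

Definition fn_comp {G1 G2 G3 : Gpd} (F2 : Fn G2 G3) (F1 : Fn G1 G2) : Fn G1 G3.
Proof.
  refine (@MkFn G1 G3 (fun x => fo F2 (fo F1 x)) (fun f => fa F2 (fa F1 f)) _ _ _ _);
    intros.
  - rewrite !fn_src; reflexivity.
  - rewrite !fn_tgt; reflexivity.
  - rewrite !fn_idn; reflexivity.
  - rewrite !cmp_comp, !fa_comp; gpd_eq.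
Defined.

Definition fn_id (G : Gpd) : Fn G G.
Proof.
  refine (@MkFn G G (fun x => x) (fun f => f) _ _ _ _); intros; try reflexivity.
  apply cmp_congr; reflexivity.
Defined.

Definition gmor_comp {X Y Z : GpdG} (F2 : GMor Y Z) (F1 : GMor X Y) : GMor X Z.
Proof.
  refine (MkGMor (fn_comp F2 F1) _ _); intros; simpl.
  - rewrite (gm_o F1), (gm_o F2); reflexivity.
  - rewrite (gm_a F1), (gm_a F2); reflexivity.
Defined.

Definition gmor_id (X : GpdG) : GMor X X :=
  MkGMor (fn_id X) (fun _ => eq_refl) (fun _ => eq_refl).

Definition omor_comp {B : GpdG} {X Y Z : Over B} (F2 : OMor B Y Z) (F1 : OMor B X Y) :
  OMor B X Z.
Proof.
  refine (@MkOMor B X Z (gmor_comp F2 F1) _ _); intros; simpl.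
  - rewrite (om_o F2), (om_o F1); reflexivity.
  - rewrite (om_a F2), (om_a F1); reflexivity.
Defined.

Definition omor_id {B : GpdG} (X : Over B) : OMor B X X :=
  @MkOMor B X X (gmor_id (tot X)) (fun _ => eq_refl) (fun _ => eq_refl).

Section RightAdjointUniqueness.
Variables (A B : GpdG) (g : GMor A B).

Lemma comp_is_pbmap_comp (X1 X2 X3 : Over B) (T : Gpd)
  (u : OMor B X2 X3) (v : OMor B X1 X2)
  (a : Fn (tot (pb g X3)) T) (b : Fn (tot (pb g X2)) T) (c : Fn (tot (pb g X1)) T) :
  comp_is a (pbmap g u) b -> comp_is b (pbmap g v) c ->
  comp_is a (pbmap g (omor_comp u v)) c.
Proof.
  intros [Ho Ha] [Ho' Ha']; split.
  - intro z; rewrite <- Ho', <- Ho; f_equal; apply sig_eq; reflexivity.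
  - intro z; rewrite <- Ha', <- Ha; f_equal; apply sig_eq; reflexivity.
Qed.

Lemma comp_is_pbmap_id (X : Over B) (T : Gpd) (a : Fn (tot (pb g X)) T) :
  comp_is a (pbmap g (omor_id X)) a.
Proof.
  split; intros [[? ?] ?]; f_equal; apply sig_eq; reflexivity.
Qed.

(* Right adjoints of [g^*] are unique up to isomorphism; the retraction half suffices. *)
Lemma right_adjoint_retract (Pi Pi' : Over A -> Over B)
  (eps : forall Y : Over A, OMor A (pb g (Pi Y)) Y)
  (eps' : forall Y : Over A, OMor A (pb g (Pi' Y)) Y) :
  right_adjoint g Pi eps -> right_adjoint g Pi' eps' -> forall Y : Over A,
  exists (u : OMor B (Pi Y) (Pi' Y)) (v : OMor B (Pi' Y) (Pi Y)),
    forall x, fo u (fo v x) = x.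
Proof.
  intros adj adj' Y.
  destruct (adj Y (Pi' Y) (eps' Y)) as [v [Hv _]].
  destruct (adj' Y (Pi Y) (eps Y)) as [u [Hu _]].
  destruct (adj' Y (Pi' Y) (eps' Y)) as [w [_ Hw]].
  exists u, v; intro x.
  destruct (Hw (omor_comp u v) (comp_is_pbmap_comp _ _ _ _ u v _ _ _ Hu Hv)) as [Huv _].
  destruct (Hw (omor_id _) (comp_is_pbmap_id _ _ _)) as [Hid _].
  exact (eq_trans (Huv x) (eq_sym (Hid x))).
Qed.
End RightAdjointUniqueness.

Lemma proj_fib_retract (B : GpdG) (X X' : Over B) (u : OMor B X X') (v : OMor B X' X) :
  (forall x, fo u (fo v x) = x) -> proj_fib (str X) -> proj_fib (str X').
Proof.
  intros uv fib x h Hh.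
  assert (Hh' : src h = fo (str X) (fo v x)) by (rewrite (om_o v); exact Hh).
  destruct (fib _ h Hh') as [ht [Hs Hp]].
  exists (fa u ht); split.
  - rewrite fn_src, Hs; apply uv.
  - rewrite (om_a u); exact Hp.
Qed.

Section DependentProduct.
Variables (A B : GpdG) (g : GMor A B) (Y : Over A).
Notation TY := (tot Y).
Notation pY := (str Y).

(* Objects and arrows of [Pi_g Y] are both families of type [Sect h] satisfying
   [IsPiArr]; an object over [b] is such a family over [idn b], i.e. a section of
   [pY] over the fibre [g^-1 b]. *)
Definition Sect (h : Ar B) := forall f : Ar A, fa g f = h -> Ar TY.

Lemma sect_congr h (phi : Sect h) f1 f2 e1 e2 : f1 = f2 -> phi f1 e1 = phi f2 e2.
Proof. intros <-; f_equal; apply proof_irrelevance. Qed.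

Lemma sect_transport h (phi : Sect h) f1 f2 e1 (E : f1 = f2) :
  phi f1 e1 = phi f2 (eq_ind f1 (fun f => fa g f = h) e1 f2 E).
Proof. subst; reflexivity. Qed.

Record IsPiArr (b : Ob B) (s : Sect (idn b)) (b' : Ob B) (s' : Sect (idn b'))
    (h : Ar B) (phi : Sect h) : Prop := {
  pa_src : src h = b;
  pa_tgt : tgt h = b';
  pa_over : forall f e, fa pY (phi f e) = f;
  pa_composable_r : forall f k e ek, tgt k = src f -> tgt (s k ek) = src (phi f e);
  pa_composable_l : forall f k e ek, tgt f = src k -> tgt (phi f e) = src (s' k ek);
  pa_comp_r : forall f k e ek efk, tgt k = src f ->
    phi (comp f k) efk = comp (phi f e) (s k ek);
  pa_comp_l : forall f k e ek ekf, tgt f = src k ->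
    phi (comp k f) ekf = comp (s' k ek) (phi f e) }.
Arguments pa_src {b s b' s' h phi}. Arguments pa_tgt {b s b' s' h phi}.
Arguments pa_over {b s b' s' h phi}.
Arguments pa_composable_r {b s b' s' h phi}. Arguments pa_composable_l {b s b' s' h phi}.
Arguments pa_comp_r {b s b' s' h phi}. Arguments pa_comp_l {b s b' s' h phi}.

Record PiOb := MkPiOb {
  ob_base : Ob B;
  ob_sect : Sect (idn ob_base);
  ob_valid : IsPiArr ob_base ob_sect ob_base ob_sect (idn ob_base) ob_sect }.

Record PiAr := MkPiAr {
  ar_src : PiOb;
  ar_tgt : PiOb;
  ar_base : Ar B;
  ar_sect : Sect ar_base;
  ar_valid : IsPiArr (ob_base ar_src) (ob_sect ar_src) (ob_base ar_tgt) (ob_sect ar_tgt)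
               ar_base ar_sect }.

Lemma PiOb_ext (x y : PiOb) : ob_base x = ob_base y ->
  (forall f e1 e2, ob_sect x f e1 = ob_sect y f e2) -> x = y.
Proof.
  destruct x as [b s ok], y as [b' s' ok']; simpl; intros <- Es.
  assert (s = s') as <- by (extensionality f; extensionality e; apply Es).
  f_equal; apply proof_irrelevance.
Qed.

Lemma PiAr_ext (u v : PiAr) :
  ar_src u = ar_src v -> ar_tgt u = ar_tgt v -> ar_base u = ar_base v ->
  (forall f e1 e2, ar_sect u f e1 = ar_sect v f e2) -> u = v.
Proof.
  destruct u as [x1 y1 h p ok], v as [x2 y2 h' p' ok']; simpl; intros <- <- <- Es.
  assert (p = p') as <- by (extensionality f; extensionality e; apply Es).
  f_equal; apply proof_irrelevance.
Qed.

Lemma ar_sect_congr (u v : PiAr) f e1 e2 : u = v -> ar_sect u f e1 = ar_sect v f e2.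
Proof. intros <-; apply sect_congr; reflexivity. Qed.

Lemma fa_idn_over (b : Ob B) a : fo g a = b -> fa g (idn a) = idn b.
Proof. intros <-; apply fn_idn. Qed.

Lemma fo_src_over (h : Ar B) b f : src h = b -> fa g f = h -> fo g (src f) = b.
Proof. intros <- <-; rewrite fn_src; reflexivity. Qed.

Lemma fo_tgt_over (h : Ar B) b f : tgt h = b -> fa g f = h -> fo g (tgt f) = b.
Proof. intros <- <-; rewrite fn_tgt; reflexivity. Qed.

Lemma fa_inv_over (h : Ar B) f : fa g f = inv h -> fa g (inv f) = h.
Proof. intro e; rewrite fn_inv, e, invK; reflexivity. Qed.

Lemma fa_inv_over_idn (b : Ob B) k : fa g k = idn b -> fa g (inv k) = idn b.
Proof. intro e; rewrite fn_inv, e; apply inv_idn. Qed.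

Definition pi_at (x : PiOb) a (E : fo g a = ob_base x) : Ob TY :=
  src (ob_sect x (idn a) (fa_idn_over _ _ E)).

Lemma pi_at_congr x1 x2 a1 a2 E1 E2 : x1 = x2 -> a1 = a2 -> pi_at x1 a1 E1 = pi_at x2 a2 E2.
Proof. intros <- <-; unfold pi_at; f_equal; apply sect_congr; reflexivity. Qed.

Lemma pa_src_at {b s b' s' h phi} (ok : IsPiArr b s b' s' h phi)
  (okx : IsPiArr b s b s (idn b) s) f e E :
  src (phi f e) = src (s (idn (src f)) E).
Proof.
  assert (E2 : fa g (comp f (idn (src f))) = h) by (rewrite comp_idr; auto).
  rewrite (sect_congr _ phi f _ e E2) by (rewrite comp_idr; auto).
  rewrite (pa_comp_r ok f (idn (src f)) e E E2) by gpd_eq.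
  rewrite src_comp; [reflexivity |]; apply (pa_composable_r ok); gpd_eq.
Qed.

Lemma pa_tgt_at {b s b' s' h phi} (ok : IsPiArr b s b' s' h phi) f e E :
  tgt (phi f e) = tgt (s' (idn (tgt f)) E).
Proof.
  assert (E2 : fa g (comp (idn (tgt f)) f) = h) by (rewrite comp_idl; auto).
  rewrite (sect_congr _ phi f _ e E2) by (rewrite comp_idl; auto).
  rewrite (pa_comp_l ok f (idn (tgt f)) e E E2) by gpd_eq.
  rewrite tgt_comp; [reflexivity |]; apply (pa_composable_l ok); gpd_eq.
Qed.

Lemma ob_sect_endo (x : PiOb) a E : tgt (ob_sect x (idn a) E) = src (ob_sect x (idn a) E).
Proof. apply (pa_composable_r (ob_valid x)); gpd_eq. Qed.

Lemma ob_sect_src x k ek :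
  src (ob_sect x k ek) = pi_at x (src k) (fo_src_over _ _ k (src_idn _ _) ek).
Proof. apply (pa_src_at (ob_valid x) (ob_valid x)). Qed.

Lemma ob_sect_tgt x k ek :
  tgt (ob_sect x k ek) = pi_at x (tgt k) (fo_tgt_over _ _ k (tgt_idn _ _) ek).
Proof.
  rewrite (pa_tgt_at (ob_valid x) k ek (fa_idn_over _ _ (fo_tgt_over _ _ k (tgt_idn _ _) ek))).
  apply ob_sect_endo.
Qed.

Lemma ar_sect_src (u : PiAr) f e :
  src (ar_sect u f e) = pi_at (ar_src u) (src f) (fo_src_over _ _ f (pa_src (ar_valid u)) e).
Proof. apply (pa_src_at (ar_valid u) (ob_valid _)). Qed.

Lemma ar_sect_tgt (u : PiAr) f e :
  tgt (ar_sect u f e) = pi_at (ar_tgt u) (tgt f) (fo_tgt_over _ _ f (pa_tgt (ar_valid u)) e).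
Proof.
  rewrite (pa_tgt_at (ar_valid u) f e
             (fa_idn_over _ _ (fo_tgt_over _ _ f (pa_tgt (ar_valid u)) e))).
  apply ob_sect_endo.
Qed.

Ltac gpd_extra ::= first [ rewrite ob_sect_src | rewrite ob_sect_tgt
                         | rewrite ar_sect_src | rewrite ar_sect_tgt ].
Ltac gpd_last ::= apply pi_at_congr; [ first [ reflexivity | assumption | symmetry; assumption ]
                                     | gpd_eq ].

Lemma ob_sect_idn (x : PiOb) a e : ob_sect x (idn a) e = idn (src (ob_sect x (idn a) e)).
Proof.
  apply idn_idem; [apply ob_sect_endo |].
  assert (EE : idn a = comp (idn a) (idn a)) by (rewrite comp_idl; gpd_eq).
  rewrite (sect_transport _ _ _ _ e EE) at 3.
  rewrite (pa_comp_r (ob_valid x) (idn a) (idn a) e e); gpd_eq.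
Qed.

Lemma ob_sect_idn_at (x : PiOb) a e E : ob_sect x (idn a) e = idn (pi_at x a E).
Proof. rewrite ob_sect_idn; unfold pi_at; do 2 f_equal; apply sect_congr; reflexivity. Qed.

Lemma ob_sect_inv (x : PiOb) k e e' : ob_sect x (inv k) e' = inv (ob_sect x k e).
Proof.
  apply inv_unique_comp; [gpd_eq |].
  assert (EE : comp k (inv k) = idn (tgt k)) by apply comp_invr.
  assert (E3 : fa g (comp k (inv k)) = idn (ob_base x))
    by (rewrite EE, fn_idn; f_equal; rewrite <- fn_tgt, e; gpd_eq).
  rewrite <- (pa_comp_r (ob_valid x) k (inv k) e e' E3) by gpd_eq.
  rewrite (sect_transport _ _ _ _ E3 EE), ob_sect_idn; f_equal; gpd_eq.
Qed.

Hypothesis g_fib : proj_fib g.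

Definition glift a (h : Ar B) (H : src h = fo g a) : Ar A :=
  proj1_sig (constructive_indefinite_description _ (g_fib a h H)).

Lemma glift_src a h H : src (glift a h H) = a.
Proof. unfold glift; destruct (constructive_indefinite_description _ _) as [? [? ?]]; auto. Qed.

Lemma glift_over a h H : fa g (glift a h H) = h.
Proof. unfold glift; destruct (constructive_indefinite_description _ _) as [? [? ?]]; auto. Qed.

Section Composition.
Variables (u v : PiAr) (H : ar_tgt u = ar_src v).

Lemma ar_base_composable : tgt (ar_base u) = src (ar_base v).
Proof. rewrite (pa_tgt (ar_valid u)), (pa_src (ar_valid v)), H; reflexivity. Qed.

Lemma pi_cmp_src_over f (e : fa g f = comp (ar_base v) (ar_base u)) :
  src (ar_base u) = fo g (src f).
Proof. rewrite <- fn_src, e, src_comp; [reflexivity | apply ar_base_composable]. Qed.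

Lemma pi_cmp_rest_over f (e : fa g f = comp (ar_base v) (ar_base u)) :
  fa g (comp f (inv (glift (src f) (ar_base u) (pi_cmp_src_over f e)))) = ar_base v.
Proof.
  pose proof ar_base_composable.
  rewrite fa_comp, fn_inv, glift_over, e, <- comp_assoc, comp_invr, comp_idr;
    try rewrite ?tgt_inv, ?glift_src; gpd_eq.
Qed.

(* [g] being an isofibration, every [f] over [ar_base v o ar_base u] splits as
   [f2 o f1] with [f1] over [ar_base u] and [f2] over [ar_base v]. *)
Definition pi_cmp_sect : Sect (comp (ar_base v) (ar_base u)) :=
  fun f e => comp (ar_sect v _ (pi_cmp_rest_over f e))
                  (ar_sect u _ (glift_over _ _ (pi_cmp_src_over f e))).

Lemma pi_cmp_sect_comp f1 f2 e1 e2 e : tgt f1 = src f2 ->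
  pi_cmp_sect (comp f2 f1) e = comp (ar_sect v f2 e2) (ar_sect u f1 e1).
Proof.
  intro H12; unfold pi_cmp_sect.
  generalize (pi_cmp_rest_over (comp f2 f1) e)
             (glift_over (src (comp f2 f1)) (ar_base u) (pi_cmp_src_over (comp f2 f1) e)).
  generalize (glift_src (src (comp f2 f1)) (ar_base u) (pi_cmp_src_over (comp f2 f1) e)).
  generalize (glift (src (comp f2 f1)) (ar_base u) (pi_cmp_src_over (comp f2 f1) e)).
  intros l Hl0 Ea El.
  destruct u as [su tu hu pu oku], v as [sv tv hv pv okv]; simpl in *; subst sv.
  assert (Hl : src l = src f1) by (rewrite Hl0; gpd_eq).
  (* [k] measures the difference between the two splittings; it lies over an identity. *)
  set (k := comp f1 (inv l)).
  assert (Ek : fa g k = idn (ob_base tu))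
    by (unfold k; rewrite fa_comp, fn_inv, El, e1, comp_invr, (pa_tgt oku); gpd_eq).
  assert (E2k : fa g (comp f2 k) = hv)
    by (rewrite fa_comp, Ek, e2, comp_idr;
        first [reflexivity | apply (pa_src okv) | unfold k; gpd_eq]).
  assert (Ekl : fa g (comp k l) = hu)
    by (rewrite fa_comp, Ek, El, comp_idl;
        first [reflexivity | apply (pa_tgt oku) | unfold k; gpd_eq]).
  rewrite (sect_congr _ pv _ (comp f2 k) Ea E2k) by (unfold k; rewrite comp_assoc; gpd_eq).
  rewrite (pa_comp_r okv f2 k e2 Ek E2k) by (unfold k; gpd_eq).
  rewrite (sect_congr _ pu f1 (comp k l) e1 Ekl)
    by (unfold k; rewrite <- comp_assoc, comp_invl, comp_idr; gpd_eq).
  rewrite (pa_comp_l oku l k El Ek Ekl) by (unfold k; gpd_eq).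
  rewrite comp_assoc; [reflexivity | |].
  - apply (pa_composable_l oku); unfold k; gpd_eq.
  - apply (pa_composable_r okv); unfold k; gpd_eq.
Qed.

Lemma pi_cmp_sect_split f e :
  exists f1 f2 e1 e2, tgt f1 = src f2 /\ comp f2 f1 = f /\
    pi_cmp_sect f e = comp (ar_sect v f2 e2) (ar_sect u f1 e1).
Proof.
  set (l := glift (src f) (ar_base u) (pi_cmp_src_over f e)).
  exists l, (comp f (inv l)), (glift_over _ _ _), (pi_cmp_rest_over f e).
  assert (Hl : src l = src f) by apply glift_src.
  split; [gpd_eq | split; [| reflexivity]].
  rewrite <- comp_assoc, comp_invl, comp_idr; gpd_eq.
Qed.

Lemma pi_cmp_sect_comp_r f k e ek efk : tgt k = src f ->
  pi_cmp_sect (comp f k) efk = comp (pi_cmp_sect f e) (ob_sect (ar_src u) k ek).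
Proof.
  intro Hk; pose proof ar_base_composable as Hh; pose proof (ar_valid u) as oku.
  destruct (pi_cmp_sect_split f e) as [f1 [f2 [e1 [e2 [H12 [<- ->]]]]]].
  rewrite src_comp in Hk by assumption.
  assert (E1 : fa g (comp f1 k) = ar_base u)
    by (rewrite fa_comp, e1, ek, comp_idr;
        first [reflexivity | apply (pa_src oku) | gpd_eq]).
  assert (EE : comp (comp f2 f1) k = comp f2 (comp f1 k)) by (rewrite comp_assoc; gpd_eq).
  rewrite (sect_transport _ pi_cmp_sect _ _ efk EE), (pi_cmp_sect_comp (comp f1 k) f2 E1 e2)
    by gpd_eq.
  rewrite (pa_comp_r oku f1 k e1 ek E1), comp_assoc; gpd_eq.
Qed.

Lemma pi_cmp_sect_comp_l f k e ek efk : tgt f = src k ->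
  pi_cmp_sect (comp k f) efk = comp (ob_sect (ar_tgt v) k ek) (pi_cmp_sect f e).
Proof.
  intro Hk; pose proof ar_base_composable as Hh; pose proof (ar_valid v) as okv.
  destruct (pi_cmp_sect_split f e) as [f1 [f2 [e1 [e2 [H12 [<- ->]]]]]].
  rewrite tgt_comp in Hk by assumption.
  assert (E2 : fa g (comp k f2) = ar_base v)
    by (rewrite fa_comp, e2, ek, comp_idl;
        first [reflexivity | apply (pa_tgt okv) | gpd_eq]).
  assert (EE : comp k (comp f2 f1) = comp (comp k f2) f1) by (rewrite comp_assoc; gpd_eq).
  rewrite (sect_transport _ pi_cmp_sect _ _ efk EE), (pi_cmp_sect_comp f1 (comp k f2) e1 E2)
    by gpd_eq.
  rewrite (pa_comp_l okv f2 k e2 ek E2), comp_assoc; gpd_eq.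
Qed.

Lemma pi_cmp_valid :
  IsPiArr (ob_base (ar_src u)) (ob_sect (ar_src u)) (ob_base (ar_tgt v)) (ob_sect (ar_tgt v))
    (comp (ar_base v) (ar_base u)) pi_cmp_sect.
Proof.
  pose proof ar_base_composable as Hh.
  pose proof (ar_valid u) as oku; pose proof (ar_valid v) as okv.
  constructor.
  - rewrite src_comp by assumption; apply (pa_src oku).
  - rewrite tgt_comp by assumption; apply (pa_tgt okv).
  - intros f e; destruct (pi_cmp_sect_split f e) as [f1 [f2 [e1 [e2 [H12 [<- ->]]]]]].
    rewrite fa_comp, (pa_over oku), (pa_over okv); gpd_eq.
  - intros f k e ek Hk; destruct (pi_cmp_sect_split f e) as [f1 [f2 [e1 [e2 [H12 [<- ->]]]]]].
    rewrite src_comp in Hk by assumption; gpd_eq.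
  - intros f k e ek Hk; destruct (pi_cmp_sect_split f e) as [f1 [f2 [e1 [e2 [H12 [<- ->]]]]]].
    rewrite tgt_comp in Hk by assumption; gpd_eq.
  - intros; apply pi_cmp_sect_comp_r; assumption.
  - intros; apply pi_cmp_sect_comp_l; assumption.
Qed.
End Composition.

Definition pi_idn (x : PiOb) : PiAr := MkPiAr x x (idn (ob_base x)) (ob_sect x) (ob_valid x).

Definition pi_cmp (v u : PiAr) (H : ar_tgt u = ar_src v) : PiAr :=
  MkPiAr (ar_src u) (ar_tgt v) (comp (ar_base v) (ar_base u))
    (pi_cmp_sect u v H) (pi_cmp_valid u v H).

Definition pi_inv_sect (u : PiAr) : Sect (inv (ar_base u)) :=
  fun f e => inv (ar_sect u (inv f) (fa_inv_over _ f e)).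

Lemma pi_inv_valid (u : PiAr) :
  IsPiArr (ob_base (ar_tgt u)) (ob_sect (ar_tgt u)) (ob_base (ar_src u)) (ob_sect (ar_src u))
    (inv (ar_base u)) (pi_inv_sect u).
Proof.
  pose proof (ar_valid u) as ok; unfold pi_inv_sect; constructor.
  - rewrite src_inv; apply (pa_tgt ok).
  - rewrite tgt_inv; apply (pa_src ok).
  - intros f e; rewrite fn_inv, (pa_over ok), invK; reflexivity.
  - intros; gpd_eq.
  - intros; gpd_eq.
  - intros f k e ek efk Hk.
    rewrite (sect_transport _ _ _ _ _ (inv_comp _ f k Hk)).
    rewrite (pa_comp_l ok (inv f) (inv k) (fa_inv_over _ f e) (fa_inv_over_idn _ k ek))
      by gpd_eq.
    rewrite inv_comp, (ob_sect_inv _ k ek), invK by gpd_eq; reflexivity.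
  - intros f k e ek efk Hk.
    rewrite (sect_transport _ _ _ _ _ (inv_comp _ k f Hk)).
    rewrite (pa_comp_r ok (inv f) (inv k) (fa_inv_over _ f e) (fa_inv_over_idn _ k ek))
      by gpd_eq.
    rewrite inv_comp, (ob_sect_inv _ k ek), invK by gpd_eq; reflexivity.
Qed.

Definition pi_inv (u : PiAr) : PiAr :=
  MkPiAr (ar_tgt u) (ar_src u) (inv (ar_base u)) (pi_inv_sect u) (pi_inv_valid u).

Lemma pi_cmp_idl (u : PiAr) H : pi_cmp (pi_idn (ar_tgt u)) u H = u.
Proof.
  pose proof (ar_valid u) as ok; apply PiAr_ext; simpl; auto.
  - apply comp_idl, (pa_tgt ok).
  - intros f e e'.
    destruct (pi_cmp_sect_split u (pi_idn (ar_tgt u)) H f e)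
      as [f1 [f2 [e1 [e2 [H12 [<- ->]]]]]].
    symmetry; apply (pa_comp_l ok); assumption.
Qed.

Lemma pi_cmp_idr (u : PiAr) H : pi_cmp u (pi_idn (ar_src u)) H = u.
Proof.
  pose proof (ar_valid u) as ok; apply PiAr_ext; simpl; auto.
  - apply comp_idr, (pa_src ok).
  - intros f e e'.
    destruct (pi_cmp_sect_split (pi_idn (ar_src u)) u H f e)
      as [f1 [f2 [e1 [e2 [H12 [<- ->]]]]]].
    symmetry; apply (pa_comp_r ok); assumption.
Qed.

Lemma pi_cmp_assoc (w v u : PiAr) (H1 : ar_tgt u = ar_src v)
  (H2 : ar_tgt (pi_cmp v u H1) = ar_src w) (H3 : ar_tgt v = ar_src w)
  (H4 : ar_tgt u = ar_src (pi_cmp w v H3)) :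
  pi_cmp w (pi_cmp v u H1) H2 = pi_cmp (pi_cmp w v H3) u H4.
Proof.
  apply PiAr_ext; simpl; auto.
  - apply comp_assoc; apply ar_base_composable; assumption.
  - intros f e e'.
    destruct (pi_cmp_sect_split (pi_cmp v u H1) w H2 f e)
      as [x1 [x2 [ex1 [ex2 [Hx [<- ->]]]]]]; simpl in *.
    destruct (pi_cmp_sect_split u v H1 x1 ex1) as [y1 [y2 [ey1 [ey2 [Hy [<- ->]]]]]].
    rewrite tgt_comp in Hx by assumption.
    assert (EE : comp x2 (comp y2 y1) = comp (comp x2 y2) y1) by (apply comp_assoc; auto).
    assert (E : fa g (comp x2 y2) = comp (ar_base w) (ar_base v))
      by (rewrite fa_comp, ex2, ey2; auto).
    rewrite (sect_transport _ _ _ _ _ EE).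
    rewrite (pi_cmp_sect_comp u (pi_cmp w v H3) H4 y1 (comp x2 y2) ey1 E) by gpd_eq; simpl.
    rewrite (pi_cmp_sect_comp v w H3 y2 x2 ey2 ex2 E) by assumption.
    apply comp_assoc; gpd_eq.
Qed.

Lemma pi_cmp_invl (u : PiAr) H : pi_cmp (pi_inv u) u H = pi_idn (ar_src u).
Proof.
  pose proof (ar_valid u) as ok; apply PiAr_ext; simpl; auto.
  - rewrite comp_invl; f_equal; apply (pa_src ok).
  - intros f e e'.
    destruct (pi_cmp_sect_split u (pi_inv u) H f e) as [x1 [x2 [ex1 [ex2 [Hx [<- ->]]]]]].
    simpl in *; unfold pi_inv_sect.
    assert (EE : x1 = comp (inv x2) (comp x2 x1))
      by (rewrite comp_assoc, comp_invl, comp_idl; gpd_eq).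
    rewrite (sect_transport _ (ar_sect u) _ _ ex1 EE).
    rewrite (pa_comp_r ok (inv x2) (comp x2 x1) (fa_inv_over _ x2 ex2) e') by gpd_eq.
    rewrite comp_assoc, comp_invl, comp_idl; gpd_eq.
Qed.

Lemma pi_cmp_invr (u : PiAr) H : pi_cmp u (pi_inv u) H = pi_idn (ar_tgt u).
Proof.
  pose proof (ar_valid u) as ok; apply PiAr_ext; simpl; auto.
  - rewrite comp_invr; f_equal; apply (pa_tgt ok).
  - intros f e e'.
    destruct (pi_cmp_sect_split (pi_inv u) u H f e) as [x1 [x2 [ex1 [ex2 [Hx [<- ->]]]]]].
    simpl in *; unfold pi_inv_sect.
    assert (EE : x2 = comp (comp x2 x1) (inv x1))
      by (rewrite <- comp_assoc, comp_invr, comp_idr; gpd_eq).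
    rewrite (sect_transport _ (ar_sect u) _ _ ex2 EE).
    rewrite (pa_comp_l ok (inv x1) (comp x2 x1) (fa_inv_over _ x1 ex1) e') by gpd_eq.
    rewrite <- comp_assoc, comp_invr, comp_idr; gpd_eq.
Qed.

Definition PiGpd : Gpd :=
  MkGpd PiOb PiAr ar_src ar_tgt pi_idn pi_cmp pi_inv
    (fun _ => eq_refl) (fun _ => eq_refl) (fun _ _ _ => eq_refl) (fun _ _ _ => eq_refl)
    pi_cmp_idl pi_cmp_idr pi_cmp_assoc (fun _ => eq_refl) (fun _ => eq_refl)
    pi_cmp_invl pi_cmp_invr.

Lemma tau_over (h h' : Ar B) (Eh : fa (tau B) h = h') f :
  fa g f = h' -> fa g (fa (tau A) f) = h.
Proof. intro e; rewrite (gm_a g), e, <- Eh, tau_a; reflexivity. Qed.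

Definition tau_sect (h : Ar B) (phi : Sect h) h' (Eh : fa (tau B) h = h') : Sect h' :=
  fun f e => fa (tau TY) (phi (fa (tau A) f) (tau_over h h' Eh f e)).

Lemma tau_valid {b s b' s' h phi} (ok : IsPiArr b s b' s' h phi) h'
  (Eh : fa (tau B) h = h') (E0 : fa (tau B) (idn b) = idn (fo (tau B) b))
  (E1 : fa (tau B) (idn b') = idn (fo (tau B) b')) :
  IsPiArr (fo (tau B) b) (tau_sect _ s _ E0) (fo (tau B) b') (tau_sect _ s' _ E1)
    h' (tau_sect _ phi _ Eh).
Proof.
  unfold tau_sect; constructor.
  - subst h'; rewrite fn_src, (pa_src ok); reflexivity.
  - subst h'; rewrite fn_tgt, (pa_tgt ok); reflexivity.
  - intros f e; rewrite (gm_a pY), (pa_over ok), tau_a; reflexivity.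
  - intros; rewrite fn_tgt, fn_src; f_equal; apply (pa_composable_r ok); gpd_eq.
  - intros; rewrite fn_tgt, fn_src; f_equal; apply (pa_composable_l ok); gpd_eq.
  - intros f k e ek efk Hk.
    rewrite (sect_transport _ phi _ _ _ (fa_comp _ _ (tau A) f k Hk)).
    rewrite (pa_comp_r ok _ _ (tau_over h h' Eh f e) (tau_over _ _ E0 k ek)) by gpd_eq.
    apply fa_comp, (pa_composable_r ok); gpd_eq.
  - intros f k e ek efk Hk.
    rewrite (sect_transport _ phi _ _ _ (fa_comp _ _ (tau A) k f Hk)).
    rewrite (pa_comp_l ok _ _ (tau_over h h' Eh f e) (tau_over _ _ E1 k ek)) by gpd_eq.
    apply fa_comp, (pa_composable_l ok); gpd_eq.
Qed.

Definition pi_tau_ob (x : PiOb) : PiOb :=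
  MkPiOb (fo (tau B) (ob_base x)) (tau_sect _ (ob_sect x) _ (fn_idn _ _))
    (tau_valid (ob_valid x) _ (fn_idn _ _) (fn_idn _ _) (fn_idn _ _)).

Definition pi_tau_ar (u : PiAr) : PiAr :=
  MkPiAr (pi_tau_ob (ar_src u)) (pi_tau_ob (ar_tgt u)) (fa (tau B) (ar_base u))
    (tau_sect _ (ar_sect u) _ eq_refl)
    (tau_valid (ar_valid u) _ eq_refl (fn_idn _ _) (fn_idn _ _)).

Lemma pi_tau_idn x : pi_tau_ar (pi_idn x) = pi_idn (pi_tau_ob x).
Proof.
  apply PiAr_ext; simpl; auto.
  - apply fn_idn.
  - intros f e1 e2; unfold tau_sect; f_equal; apply sect_congr; reflexivity.
Qed.

Lemma pi_tau_cmp (v u : PiAr) H H' :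
  pi_tau_ar (pi_cmp v u H) = pi_cmp (pi_tau_ar v) (pi_tau_ar u) H'.
Proof.
  apply PiAr_ext; simpl; auto.
  - apply fa_comp, ar_base_composable; assumption.
  - intros f e e'.
    destruct (pi_cmp_sect_split (pi_tau_ar u) (pi_tau_ar v) H' f e')
      as [x1 [x2 [ex1 [ex2 [Hx [<- ->]]]]]].
    simpl; unfold tau_sect.
    rewrite (sect_transport _ (pi_cmp_sect u v H) _ _ _ (fa_comp _ _ (tau A) x2 x1 Hx)).
    rewrite (pi_cmp_sect_comp u v H _ _ (tau_over _ _ eq_refl x1 ex1)
               (tau_over _ _ eq_refl x2 ex2)) by gpd_eq.
    apply fa_comp; gpd_eq.
Qed.

Lemma pi_tau_obK x : pi_tau_ob (pi_tau_ob x) = x.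
Proof.
  apply PiOb_ext; simpl; [apply tau_o |].
  intros f e1 e2; unfold tau_sect; rewrite tau_a; apply sect_congr, tau_a.
Qed.

Lemma pi_tau_arK u : pi_tau_ar (pi_tau_ar u) = u.
Proof.
  apply PiAr_ext; simpl; try apply pi_tau_obK; [apply tau_a |].
  intros f e1 e2; unfold tau_sect; rewrite tau_a; apply sect_congr, tau_a.
Qed.

Definition pi_tau : Fn PiGpd PiGpd :=
  @MkFn PiGpd PiGpd pi_tau_ob pi_tau_ar (fun _ => eq_refl) (fun _ => eq_refl)
    pi_tau_idn pi_tau_cmp.

Definition PiGpdG : GpdG := MkGpdG PiGpd pi_tau pi_tau_obK pi_tau_arK.

Definition pi_proj_fn : Fn PiGpdG B.
Proof.
  refine (@MkFn PiGpdG B ob_base ar_base _ _ _ _).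
  - intro u; apply (pa_src (ar_valid u)).
  - intro u; apply (pa_tgt (ar_valid u)).
  - intro x; reflexivity.
  - intros v u H H'; symmetry; apply cmp_comp.
Defined.

Definition pi_proj : GMor PiGpdG B :=
  MkGMor pi_proj_fn (fun _ => eq_refl) (fun _ => eq_refl).

Definition Pi : Over B := MkOver PiGpdG pi_proj.

Definition counit_ob (z : Ob (tot (pb g Pi))) : Ob TY :=
  pi_at (snd (proj1_sig z)) (fst (proj1_sig z)) (proj2_sig z).

Definition counit_ar (z : Ar (tot (pb g Pi))) : Ar TY :=
  ar_sect (snd (proj1_sig z)) (fst (proj1_sig z)) (proj2_sig z).

Definition counit_fn : Fn (tot (pb g Pi)) TY.
Proof.
  refine (@MkFn (tot (pb g Pi)) TY counit_ob counit_ar _ _ _ _).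
  - intros [[f u] e]; unfold counit_ar, counit_ob; simpl.
    rewrite ar_sect_src; apply pi_at_congr; reflexivity.
  - intros [[f u] e]; unfold counit_ar, counit_ob; simpl.
    rewrite ar_sect_tgt; apply pi_at_congr; reflexivity.
  - intros [[a x] e]; apply ob_sect_idn_at.
  - intros [[f2 v] e2] [[f1 u] e1] H H'; unfold counit_ar; simpl.
    rewrite cmp_comp.
    assert (EE : cmp f2 f1 (f_equal (fun w => fst (proj1_sig w)) H) = comp f2 f1)
      by apply cmp_comp.
    rewrite (sect_transport _ (pi_cmp_sect _ _ _) _ _ _ EE).
    apply pi_cmp_sect_comp, (f_equal (fun w => fst (proj1_sig w)) H).
Defined.

Definition counit_gm : GMor (tot (pb g Pi)) TY.
Proof.
  refine (MkGMor counit_fn _ _).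
  - intros [[a x] e]; cbn; unfold counit_ob, pi_at; cbn; unfold tau_sect.
    rewrite fn_src; do 2 f_equal; apply sect_congr.
    rewrite fn_idn, tau_o; reflexivity.
  - intros [[f u] e]; cbn; unfold counit_ar; cbn; unfold tau_sect.
    f_equal; apply sect_congr, tau_a.
Defined.

Definition counit : OMor A (pb g Pi) Y.
Proof.
  refine (MkOMor counit_gm _ _).
  - intros [[a x] e]; simpl; unfold counit_ob, pi_at.
    rewrite <- fn_src, (pa_over (ob_valid x)), src_idn; reflexivity.
  - intros [[f u] e]; apply (pa_over (ar_valid u)).
Defined.

Section Transpose.
Variables (X : Over B) (f : OMor A (pb g X) Y).
Notation pX := (str X).

Definition transpose_sect (e : Ar (tot X)) (h : Ar B) (Eh : fa pX e = h) : Sect h :=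
  fun k E => fa f (exist (fun p => fa g (fst p) = fa pX (snd p)) (k, e) (eq_trans E (eq_sym Eh))
                   : Ar (tot (pb g X))).

Lemma pb_comp (z2 z1 : Ar (tot (pb g X))) : tgt z1 = src z2 ->
  proj1_sig (comp z2 z1) = (comp (fst (proj1_sig z2)) (fst (proj1_sig z1)),
                            comp (snd (proj1_sig z2)) (snd (proj1_sig z1))).
Proof.
  intro H; rewrite <- (cmp_comp _ _ _ H).
  destruct z2 as [[a2 b2] E2], z1 as [[a1 b1] E1]; cbn; rewrite !cmp_comp; reflexivity.
Qed.

Lemma transpose_valid e x1 x2 (E1 : src e = x1) (E2 : tgt e = x2) h Eh :
  IsPiArr (fo pX x1) (transpose_sect (idn x1) _ (fn_idn pX x1))
    (fo pX x2) (transpose_sect (idn x2) _ (fn_idn pX x2)) h (transpose_sect e h Eh).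
Proof.
  subst x1 x2 h; unfold transpose_sect; constructor.
  - apply fn_src.
  - apply fn_tgt.
  - intros k e'; apply (om_a f).
  - intros k' k e' ek Hk; rewrite fn_tgt, fn_src; f_equal.
    apply sig_eq; cbn; rewrite Hk, tgt_idn; reflexivity.
  - intros k' k e' ek Hk; rewrite fn_tgt, fn_src; f_equal.
    apply sig_eq; cbn; rewrite Hk, src_idn; reflexivity.
  - intros k' k e' ek efk Hk; rewrite <- fa_comp.
    + f_equal; apply sig_eq; rewrite pb_comp; cbn; [rewrite comp_idr; gpd_eq |].
      apply sig_eq; cbn; rewrite Hk, tgt_idn; reflexivity.
    + apply sig_eq; cbn; rewrite Hk, tgt_idn; reflexivity.
  - intros k' k e' ek efk Hk; rewrite <- fa_comp.
    + f_equal; apply sig_eq; rewrite pb_comp; cbn; [rewrite comp_idl; gpd_eq |].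
      apply sig_eq; cbn; rewrite Hk, src_idn; reflexivity.
    + apply sig_eq; cbn; rewrite Hk, src_idn; reflexivity.
Qed.

Definition transpose_ob (x : Ob (tot X)) : PiOb :=
  MkPiOb (fo pX x) (transpose_sect (idn x) _ (fn_idn pX x))
    (transpose_valid (idn x) x x (src_idn _ x) (tgt_idn _ x) _ _).

Definition transpose_ar (e : Ar (tot X)) : PiAr :=
  MkPiAr (transpose_ob (src e)) (transpose_ob (tgt e)) (fa pX e) (transpose_sect e _ eq_refl)
    (transpose_valid e _ _ eq_refl eq_refl _ eq_refl).

Lemma transpose_idn x : transpose_ar (idn x) = pi_idn (transpose_ob x).
Proof.
  apply PiAr_ext; simpl.
  - f_equal; apply src_idn.
  - f_equal; apply tgt_idn.
  - apply fn_idn.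
  - intros k e1 e2; unfold transpose_sect; f_equal; apply sig_eq; reflexivity.
Qed.

Lemma transpose_cmp e2 e1 H H' :
  transpose_ar (cmp e2 e1 H) = pi_cmp (transpose_ar e2) (transpose_ar e1) H'.
Proof.
  apply PiAr_ext; simpl.
  - f_equal; apply src_cmp.
  - f_equal; apply tgt_cmp.
  - rewrite cmp_comp; apply fa_comp; assumption.
  - intros k E1 E2.
    destruct (pi_cmp_sect_split (transpose_ar e1) (transpose_ar e2) H' k E2)
      as [k1 [k2 [ek1 [ek2 [Hk [<- ->]]]]]].
    simpl; unfold transpose_sect; rewrite <- fa_comp.
    + f_equal; apply sig_eq; rewrite pb_comp; cbn; [rewrite cmp_comp; reflexivity |].
      apply sig_eq; cbn; rewrite Hk, H; reflexivity.
    + apply sig_eq; cbn; rewrite Hk, H; reflexivity.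
Qed.

Lemma transpose_tau_ob x : transpose_ob (fo (tau (tot X)) x) = pi_tau_ob (transpose_ob x).
Proof.
  apply PiOb_ext; simpl; [apply (gm_o pX) |].
  intros k e1 e2; unfold tau_sect, transpose_sect; rewrite <- (gm_a f); f_equal.
  apply sig_eq; cbn; rewrite tau_a, fn_idn; reflexivity.
Qed.

Lemma transpose_tau_ar e : transpose_ar (fa (tau (tot X)) e) = pi_tau_ar (transpose_ar e).
Proof.
  apply PiAr_ext; simpl.
  - rewrite fn_src; apply transpose_tau_ob.
  - rewrite fn_tgt; apply transpose_tau_ob.
  - apply (gm_a pX).
  - intros k e1 e2; unfold tau_sect, transpose_sect; rewrite <- (gm_a f); f_equal.
    apply sig_eq; cbn; rewrite tau_a; reflexivity.
Qed.

Definition transpose_fn : Fn (tot X) PiGpdG :=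
  @MkFn (tot X) PiGpdG transpose_ob transpose_ar (fun _ => eq_refl) (fun _ => eq_refl)
    transpose_idn transpose_cmp.

Definition transpose_gm : GMor (tot X) PiGpdG :=
  MkGMor transpose_fn transpose_tau_ob transpose_tau_ar.

Definition transpose : OMor B X Pi :=
  @MkOMor B X Pi transpose_gm (fun _ => eq_refl) (fun _ => eq_refl).

Lemma counit_transpose : comp_is counit (pbmap g transpose) f.
Proof.
  split.
  - intros [[a x] e]; cbn; unfold counit_ob, pi_at; cbn; unfold transpose_sect.
    rewrite fn_src; f_equal; apply sig_eq; cbn; rewrite !src_idn; reflexivity.
  - intros [[k e] E]; cbn; unfold counit_ar; cbn; unfold transpose_sect.
    f_equal; apply sig_eq; reflexivity.
Qed.

Lemma counit_factor_sect (u : OMor B X Pi) : comp_is counit (pbmap g u) f ->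
  forall e k e1, ar_sect (fa u e) k e1 = transpose_sect e _ eq_refl k (eq_trans e1 (om_a u e)).
Proof.
  intros [_ Hc] e k e1.
  pose proof (Hc (exist (fun p => fa g (fst p) = fa pX (snd p)) (k, e) (eq_trans e1 (om_a u e))))
    as Hz; cbn in Hz; unfold counit_ar in Hz; cbn in Hz.
  etransitivity; [| etransitivity; [exact Hz |]].
  - apply sect_congr; reflexivity.
  - unfold transpose_sect; f_equal; apply sig_eq; reflexivity.
Qed.

Lemma transpose_unique (u : OMor B X Pi) : comp_is counit (pbmap g u) f -> fn_eq u transpose.
Proof.
  intro Hc; pose proof (counit_factor_sect u Hc) as Hs.
  assert (Ho : forall x, fo u x = transpose_ob x).
  { intro x; apply PiOb_ext; [apply (om_o u x) |]; intros k e1 e2.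
    change (ob_sect (fo u x) k e1) with (ar_sect (pi_idn (fo u x)) k e1).
    assert (E : fa g k = ar_base (fa u (idn x))) by (rewrite (fn_idn u); exact e1).
    rewrite (ar_sect_congr (pi_idn (fo u x)) _ k e1 E (eq_sym (fn_idn u x))), Hs.
    cbn; unfold transpose_sect; apply (f_equal (fa f)), sig_eq; reflexivity. }
  split; [exact Ho |]; intro e; apply PiAr_ext.
  - change (ar_src (fa u e)) with (src (fa u e)); rewrite fn_src; apply Ho.
  - change (ar_tgt (fa u e)) with (tgt (fa u e)); rewrite fn_tgt; apply Ho.
  - apply (om_a u e).
  - intros k e1 e2; rewrite Hs; apply sect_congr; reflexivity.
Qed.
End Transpose.

Lemma Pi_couniversal (X : Over B) (f : OMor A (pb g X) Y) :
  exists u : OMor B X Pi, comp_is counit (pbmap g u) f /\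
    (forall u' : OMor B X Pi, comp_is counit (pbmap g u') f -> fn_eq u' u).
Proof. exists (transpose X f); split; [apply counit_transpose | apply transpose_unique]. Qed.

Section Pushforward.
Variable x : PiOb.
Notation b := (ob_base x).
Notation s := (ob_sect x).

Lemma pi_at_over a E : fo pY (pi_at x a E) = a.
Proof. unfold pi_at; rewrite <- fn_src, (pa_over (ob_valid x)), src_idn; reflexivity. Qed.

Record Transport (c : Ob B) : Type := MkTransport {
  tr_base : Ar B;
  tr_lift : forall a, fo g a = c -> Ar A;
  tr_ylift : forall a, fo g a = c -> Ar TY;
  tr_base_src : src tr_base = c;
  tr_base_tgt : tgt tr_base = b;
  tr_lift_src : forall a E, src (tr_lift a E) = a;
  tr_lift_over : forall a E, fa g (tr_lift a E) = tr_base;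
  tr_ylift_src : forall a E E', src (tr_ylift a E) = pi_at x (tgt (tr_lift a E)) E';
  tr_ylift_over : forall a E, fa pY (tr_ylift a E) = inv (tr_lift a E) }.
Arguments tr_base {c}. Arguments tr_lift {c}. Arguments tr_ylift {c}.
Arguments tr_base_src {c}. Arguments tr_base_tgt {c}.
Arguments tr_lift_over {c}. Arguments tr_ylift_over {c}.

Lemma tr_ylift_src_at c (T : Transport c) a E :
  src (tr_ylift T a E)
  = pi_at x (tgt (tr_lift T a E)) (fo_tgt_over _ _ _ (tr_base_tgt T) (tr_lift_over T a E)).
Proof. apply tr_ylift_src. Qed.

Lemma tr_lift_congr c (T : Transport c) a1 a2 E1 E2 : a1 = a2 -> tr_lift T a1 E1 = tr_lift T a2 E2.
Proof. intros <-; f_equal; apply proof_irrelevance. Qed.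

Lemma tr_ylift_congr c (T : Transport c) a1 a2 E1 E2 :
  a1 = a2 -> tr_ylift T a1 E1 = tr_ylift T a2 E2.
Proof. intros <-; f_equal; apply proof_irrelevance. Qed.

Ltac gpd_extra ::= first [ rewrite ob_sect_src | rewrite ob_sect_tgt
                         | rewrite ar_sect_src | rewrite ar_sect_tgt
                         | rewrite tr_lift_src | rewrite tr_ylift_src_at ].
Ltac gpd_last ::= first [ apply pi_at_congr;
                            [ first [ reflexivity | assumption | symmetry; assumption ]
                            | gpd_eq ]
                        | apply f_equal, tr_lift_congr; gpd_eq ].

Section TransportSection.
Variables (c1 c2 : Ob B) (T1 : Transport c1) (T2 : Transport c2) (hf : Ar B)
  (Ehf : comp (inv (tr_base T2)) (tr_base T1) = hf).

Lemma transport_src_over f : fa g f = hf -> fo g (src f) = c1.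
Proof.
  intro e; rewrite <- fn_src, e, <- Ehf, src_comp, (tr_base_src T1); [reflexivity |].
  rewrite src_inv, (tr_base_tgt T1), (tr_base_tgt T2); reflexivity.
Qed.

Lemma transport_tgt_over f : fa g f = hf -> fo g (tgt f) = c2.
Proof.
  intro e; rewrite <- fn_tgt, e, <- Ehf, tgt_comp, tgt_inv, (tr_base_src T2); [reflexivity |].
  rewrite src_inv, (tr_base_tgt T1), (tr_base_tgt T2); reflexivity.
Qed.

Definition transport_conj f (e : fa g f = hf) : Ar A :=
  comp (tr_lift T2 (tgt f) (transport_tgt_over f e))
    (comp f (inv (tr_lift T1 (src f) (transport_src_over f e)))).

Lemma transport_conj_over f e : fa g (transport_conj f e) = idn b.
Proof.
  pose proof (tr_base_tgt T1); pose proof (tr_base_tgt T2).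
  unfold transport_conj; rewrite fa_comp, fa_comp, fn_inv, !tr_lift_over, e, <- Ehf;
    try gpd_eq.
  rewrite <- (comp_assoc _ (inv (tr_base T2)) (tr_base T1) (inv (tr_base T1))), comp_invr,
    comp_idr, comp_invr; gpd_eq.
Qed.

(* Conjugate [f] into the fibre over [b] along the lifts, apply [x] there, and
   conjugate back along the [tr_ylift]s. *)
Definition transport_sect : Sect hf := fun f e =>
  comp (tr_ylift T2 (tgt f) (transport_tgt_over f e))
    (comp (s _ (transport_conj_over f e)) (inv (tr_ylift T1 (src f) (transport_src_over f e)))).

Lemma transport_sect_src f e :
  src (transport_sect f e) = tgt (tr_ylift T1 (src f) (transport_src_over f e)).
Proof. unfold transport_sect, transport_conj; gpd_eq. Qed.

Lemma transport_sect_tgt f e :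
  tgt (transport_sect f e) = tgt (tr_ylift T2 (tgt f) (transport_tgt_over f e)).
Proof. unfold transport_sect, transport_conj; gpd_eq. Qed.

Lemma transport_sect_over f e : fa pY (transport_sect f e) = f.
Proof.
  unfold transport_sect, transport_conj.
  rewrite !fa_comp, fn_inv, !tr_ylift_over, (pa_over (ob_valid x)), invK; try gpd_eq.
  rewrite <- comp_assoc, <- (comp_assoc _ f), comp_invl, comp_idr, comp_assoc, comp_invl,
    comp_idl; gpd_eq.
Qed.
End TransportSection.
Arguments transport_src_over {c1 c2 T1 T2 hf} Ehf f e.
Arguments transport_tgt_over {c1 c2 T1 T2 hf} Ehf f e.
Arguments transport_conj {c1 c2 T1 T2 hf} Ehf f e.
Arguments transport_conj_over {c1 c2 T1 T2 hf} Ehf f e.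
Arguments transport_sect {c1 c2 T1 T2 hf} Ehf f e.

Section TransportComp.
Variables (c1 c2 c3 : Ob B) (T1 : Transport c1) (T2 : Transport c2) (T3 : Transport c3)
  (h12 h23 h13 : Ar B) (E12 : comp (inv (tr_base T2)) (tr_base T1) = h12)
  (E23 : comp (inv (tr_base T3)) (tr_base T2) = h23)
  (E13 : comp (inv (tr_base T3)) (tr_base T1) = h13)
  (f1 f2 : Ar A) (e1 : fa g f1 = h12) (e2 : fa g f2 = h23) (e : fa g (comp f2 f1) = h13)
  (H12 : tgt f1 = src f2).

Lemma transport_conj_comp :
  transport_conj E13 (comp f2 f1) e
  = comp (transport_conj E23 f2 e2) (transport_conj E12 f1 e1).
Proof.
  unfold transport_conj.
  rewrite (tr_lift_congr _ T3 _ (tgt f2) _ (transport_tgt_over E23 f2 e2)) by gpd_eq.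
  rewrite (tr_lift_congr _ T1 _ (src f1) _ (transport_src_over E12 f1 e1)) by gpd_eq.
  rewrite (tr_lift_congr _ T2 (src f2) (tgt f1) _ (transport_tgt_over E12 f1 e1)) by gpd_eq.
  comp_right_assoc; rewrite comp_invKl by gpd_eq; reflexivity.
Qed.

Lemma transport_sect_comp :
  transport_sect E13 (comp f2 f1) e
  = comp (transport_sect E23 f2 e2) (transport_sect E12 f1 e1).
Proof.
  unfold transport_sect.
  rewrite (sect_transport _ s _ _ _ transport_conj_comp).
  rewrite (pa_comp_r (ob_valid x) _ _ (transport_conj_over E23 f2 e2)
             (transport_conj_over E12 f1 e1)) by (unfold transport_conj; gpd_eq).
  rewrite (tr_ylift_congr _ T3 _ (tgt f2) _ (transport_tgt_over E23 f2 e2)) by gpd_eq.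
  rewrite (tr_ylift_congr _ T1 _ (src f1) _ (transport_src_over E12 f1 e1)) by gpd_eq.
  rewrite (tr_ylift_congr _ T2 (src f2) (tgt f1) _ (transport_tgt_over E12 f1 e1)) by gpd_eq.
  unfold transport_conj; comp_right_assoc; rewrite comp_invKl by gpd_eq; reflexivity.
Qed.
End TransportComp.

Definition transport_refl : Transport b.
Proof.
  refine (MkTransport b (idn b) (fun a _ => idn a) (fun a E => idn (pi_at x a E)) _ _ _ _ _ _).
  - apply src_idn.
  - apply tgt_idn.
  - intros; apply src_idn.
  - intros; apply fa_idn_over; assumption.
  - intros; rewrite src_idn; apply pi_at_congr; [reflexivity | rewrite tgt_idn; reflexivity].
  - intros; rewrite fn_idn, pi_at_over, inv_idn; reflexivity.
Defined.

Lemma transport_refl_base : comp (inv (tr_base transport_refl)) (tr_base transport_refl) = idn b.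
Proof. simpl; rewrite inv_idn, comp_idl; gpd_eq. Qed.

Lemma transport_sect_refl k e : transport_sect transport_refl_base k e = s k e.
Proof.
  unfold transport_sect, transport_conj; simpl.
  assert (EQ : comp (idn (tgt k)) (comp k (inv (idn (src k)))) = k)
    by (rewrite (inv_idn A), comp_idr, comp_idl; gpd_eq).
  rewrite (sect_transport _ s _ _ _ EQ), (inv_idn TY), comp_idr, comp_idl by gpd_eq.
  apply sect_congr; reflexivity.
Qed.

Hypothesis y_fib : proj_fib pY.

Definition ylift y (k : Ar A) (H : src k = fo pY y) : Ar TY :=
  proj1_sig (constructive_indefinite_description _ (y_fib y k H)).

Lemma ylift_src y k H : src (ylift y k H) = y.
Proof. unfold ylift; destruct (constructive_indefinite_description _ _) as [? [? ?]]; auto. Qed.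

Lemma ylift_over y k H : fa pY (ylift y k H) = k.
Proof. unfold ylift; destruct (constructive_indefinite_description _ _) as [? [? ?]]; auto. Qed.

Section Along.
Variables (h : Ar B) (Hh : src h = b).

Lemma along_lift_src a : fo g a = tgt h -> src (inv h) = fo g a.
Proof. intro E; rewrite src_inv; symmetry; exact E. Qed.

Definition along_lift a E := glift a (inv h) (along_lift_src a E).

Lemma along_lift_tgt_over a E : fo g (tgt (along_lift a E)) = b.
Proof. apply (fo_tgt_over (inv h)); [rewrite tgt_inv; exact Hh | apply glift_over]. Qed.

Lemma along_ylift_src a E :
  src (inv (along_lift a E)) = fo pY (pi_at x (tgt (along_lift a E)) (along_lift_tgt_over a E)).
Proof. rewrite src_inv, pi_at_over; reflexivity. Qed.

Definition along_ylift a E := ylift _ _ (along_ylift_src a E).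

Definition transport_along : Transport (tgt h).
Proof.
  refine (MkTransport (tgt h) (inv h) along_lift along_ylift _ _ _ _ _ _).
  - apply src_inv.
  - rewrite tgt_inv; exact Hh.
  - intros; apply glift_src.
  - intros; apply glift_over.
  - intros; unfold along_ylift; rewrite ylift_src; apply pi_at_congr; reflexivity.
  - intros; apply ylift_over.
Defined.

Lemma transport_along_base :
  comp (inv (tr_base transport_along)) (tr_base transport_along) = idn (tgt h).
Proof. simpl; rewrite invK, comp_invr; reflexivity. Qed.

Lemma transport_along_h : comp (inv (tr_base transport_along)) (tr_base transport_refl) = h.
Proof. simpl; rewrite invK, comp_idr; [reflexivity | exact Hh]. Qed.

Definition pushed_sect := transport_sect transport_along_base.
Definition push_sect := transport_sect transport_along_h.

Lemma pushed_valid : IsPiArr (tgt h) pushed_sect (tgt h) pushed_sect (idn (tgt h)) pushed_sect.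
Proof.
  unfold pushed_sect; constructor.
  - apply src_idn.
  - apply tgt_idn.
  - intros; apply transport_sect_over.
  - intros; rewrite transport_sect_tgt, transport_sect_src; f_equal; apply tr_ylift_congr; auto.
  - intros; rewrite transport_sect_tgt, transport_sect_src; f_equal; apply tr_ylift_congr; auto.
  - intros; apply transport_sect_comp; assumption.
  - intros; apply transport_sect_comp; assumption.
Qed.

Definition pushed : PiOb := MkPiOb (tgt h) pushed_sect pushed_valid.

Lemma push_valid : IsPiArr b s (tgt h) pushed_sect h push_sect.
Proof.
  unfold pushed_sect, push_sect; constructor.
  - exact Hh.
  - reflexivity.
  - intros; apply transport_sect_over.
  - intros; rewrite transport_sect_src; simpl; gpd_eq.
  - intros; rewrite transport_sect_tgt, transport_sect_src; f_equal; apply tr_ylift_congr; auto.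
  - intros f k e ek efk Hk; rewrite <- (transport_sect_refl k ek).
    apply transport_sect_comp; assumption.
  - intros; apply transport_sect_comp; assumption.
Qed.

Definition push_arr : PiAr := MkPiAr x pushed h push_sect push_valid.
End Along.
End Pushforward.

Lemma Pi_proj_fib : proj_fib pY -> proj_fib (str Pi).
Proof. intros y_fib x h Hh; exists (push_arr x y_fib h Hh); split; reflexivity. Qed.
End DependentProduct.

Theorem lemma4p10 (A B : GpdG) (g : GMor A B) :
  proj_fib g ->
  (exists (Pi : Over A -> Over B) (eps : forall Y : Over A, OMor A (pb g (Pi Y)) Y),
      right_adjoint g Pi eps) /\
  (forall (Pi : Over A -> Over B) (eps : forall Y : Over A, OMor A (pb g (Pi Y)) Y),
      right_adjoint g Pi eps ->
      forall Y : Over A, proj_fib (str Y) -> proj_fib (str (Pi Y))).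
Proof.
  intro g_fib.
  assert (adj : right_adjoint g (fun Y => Pi A B g Y g_fib) (fun Y => counit A B g Y g_fib))
    by (intros Y; apply Pi_couniversal).
  split; [exists (fun Y => Pi A B g Y g_fib), (fun Y => counit A B g Y g_fib); exact adj |].
  intros Pi' eps' adj' Y y_fib.
  destruct (right_adjoint_retract A B g _ _ _ _ adj adj' Y) as [u [v uv]].
  exact (proj_fib_retract B _ _ u v uv (Pi_proj_fib A B g Y g_fib y_fib)).
Qed.
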